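(* Let $G=GL_n(\mathbb C)$, $B$ the upper triangular invertible matrices, $U^-$ the lower triangular unipotent matrices, $W=S_n$ realized by permutation matrices, and let $S$ be a diagonal matrix in $\mathfrak{gl}_n(\mathbb C)$. Let $H_\Delta=\{A=[a_{ij}]\in\mathfrak{gl}_n(\mathbb C): a_{ij}=0\text{ whenever } i>j+1\}$ be the standard Hessenberg space and $\mathcal B(S)=\{gB\in G/B: g^{-1}Sg\in H_\Delta\}$. For $w\in W$, let $u$ be the generic element of $U^-$ with coordinates $x_{ij}$ ($i>j$), let $A=u^{-1}w^{-1}Swu$, whose entries $a_{ij}$ are polynomials in $\mathbb C[U^-]=\mathbb C[x_{ij}:i>j]$, and let $I_{w,\mathcal B(S)}=\langle a_{ij}: i>j+1\rangle\subseteq\mathbb C[U^-]$. Then for each $w\in W$, $I_{w,\mathcal B(S)}$ has a Gröbner basis with square-free lead terms (for a suitable monomial order) and is therefore radical; in particular $I_{w,\mathcal B(S)}$ is the ideal of the patch $\mathcal N_{w,\mathcal B(S)}=wB_-B/B\cap\mathcal B(S)$, identified with $\{wu\in wU^-: wuB\in\mathcal B(S)\}\cong\{u\in U^-: u^{-1}w^{-1}Swu\in H_\Delta\}$.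
   Context: $B_-$ denotes the invertible lower triangular matrices; $wB_-B/B$ is an affine open neighborhood of $wB$ in $G/B$, isomorphic to $wU^-$ via $wu\mapsto wuB$. *)

From HB Require Import structures.
From mathcomp Require Import all_boot all_order all_fingroup all_algebra.
From mathcomp Require Import reals.
From mathcomp.real_closed Require Import complex.
From mathcomp Require Import mpoly.

Set Implicit Arguments.
Unset Strict Implicit.
Unset Printing Implicit Defensive.
Import Order.TTheory GRing.Theory Num.Theory.
Local Open Scope ring_scope.

(* Index set of the coordinates x_ij (i > j) of U^- *)
Definition Lidx (n : nat) := {p : 'I_n * 'I_n | (p.2 < p.1)%N}.
Definition nv (n : nat) : nat := #|{: Lidx n}|.

Section Defs.
Variable K : fieldType.

(* generic lower unitriangular matrix u with entries x_ij = 'X_(index of (i,j)) *)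
Definition genU (n : nat) : 'M[{mpoly K[nv n]}]_n :=
  \matrix_(i, j) match @insub _ (fun p : 'I_n * 'I_n => (p.2 < p.1)%N) (Lidx n) (i, j) with
                 | Some p => 'X_(enum_rank p)
                 | None => (i == j)%:R
                 end.

Definition evalU (n : nat) (x : 'I_(nv n) -> K) : 'M[K]_n :=
  \matrix_(i, j) match @insub _ (fun p : 'I_n * 'I_n => (p.2 < p.1)%N) (Lidx n) (i, j) with
                 | Some p => x (enum_rank p)
                 | None => (i == j)%:R
                 end.

Definition Amat (n : nat) (S : 'M[K]_n) (w : 'S_n) : 'M[{mpoly K[nv n]}]_n :=
  let Wm := perm_mx w in
  invmx (genU n) *m invmx Wm *m map_mx (fun c => c%:MP) S *m Wm *m genU n.

Definition in_HDelta (n : nat) (A : 'M[K]_n) : Prop :=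
  forall i j : 'I_n, (j.+1 < i)%N -> A i j = 0.

Definition ideal_gen (T : comPzRingType) (P : pred T) (f : T) : Prop :=
  exists s : seq (T * T), all (fun p => P p.2) s /\ f = \sum_(p <- s) p.1 * p.2.

Definition Iw (n : nat) (S : 'M[K]_n) (w : 'S_n) : {mpoly K[nv n]} -> Prop :=
  ideal_gen [pred g | [exists i : 'I_n, exists j : 'I_n,
                        (j.+1 < i)%N && (g == Amat S w i j)]].

(* the patch N_{w,B(S)} identified with {u in U^- : u^{-1} w^{-1} S w u in H_Delta} *)
Definition patch (n : nat) (S : 'M[K]_n) (w : 'S_n) (x : 'I_(nv n) -> K) : Prop :=
  let u := evalU x in
  let Wm := perm_mx w in
  in_HDelta (invmx u *m invmx Wm *m S *m Wm *m u).

Definition vanishing_ideal (k : nat) (V : ('I_k -> K) -> Prop) (f : {mpoly K[k]}) : Prop :=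
  forall x, V x -> f.@[x] = 0.

Definition radical_ideal (T : comPzRingType) (I : T -> Prop) : Prop :=
  forall (f : T) (m : nat), I (f ^+ m) -> I f.

End Defs.

Definition monomial_order (k : nat) (le : rel 'X_{1..k}) : Prop :=
  [/\ reflexive le, antisymmetric le, transitive le, total le &
      ((forall a b c, le a b -> le (mnm_add a c) (mnm_add b c))
    /\ (forall a, le (@mnm0 k) a))].

Definition is_lead (K : fieldType) (k : nat) (le : rel 'X_{1..k}) (p : {mpoly K[k]})
  (m : 'X_{1..k}) : Prop :=
  m \in msupp p /\ (forall m', m' \in msupp p -> le m' m).

Definition groebner_basis (K : fieldType) (k : nat) (le : rel 'X_{1..k})
  (I : {mpoly K[k]} -> Prop) (G : seq {mpoly K[k]}) : Prop :=
  (forall g, g \in G -> I g) /\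
  (forall f, I f -> f != 0 ->
     exists2 g, g \in G &
       exists mg mf, [/\ is_lead le g mg, is_lead le f mf & lem mg mf]).

Definition squarefree_leads (K : fieldType) (k : nat) (le : rel 'X_{1..k})
  (G : seq {mpoly K[k]}) : Prop :=
  forall g, g \in G -> forall mg, is_lead le g mg -> forall i, (mg i <= 1)%N.

(* Write A = u^-1 D u with D = w^-1 S w = diag(d).  Since u A = D u and A is lower
   triangular with diagonal d, the entries of A below the first subdiagonal generate the same
   ideal as the f_ij = (d_i - d_j) x_ij - (d_{j+1} - d_j) x_{j+1,j} x_{i,j+1}, j + 1 < i.
   Where d_i <> d_j (a pivot) f_ij solves for x_ij; iterating writes every pivot variable,
   modulo the ideal, as a scalar times a squarefree monomial in the other variables, and
   substituting into the remaining f_ij (where d_i = d_j) leaves squarefree monomials.  Hence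
   the ideal is generated by the pivot relations and squarefree monomials in free variables:
   the patch is a graph over the zero set of these monomials, so the ideal is its vanishing
   ideal, and for a weight order making each pivot variable lead its relation these
   generators are a Groebner basis with squarefree leads. *)

From HB Require Import structures.
From mathcomp Require Import all_boot all_order all_fingroup all_algebra.
From mathcomp Require Import reals.
From mathcomp.real_closed Require Import complex.
From mathcomp Require Import mpoly.
From mathcomp Require Import zify ring.

Set Implicit Arguments.
Unset Strict Implicit.
Unset Printing Implicit Defensive.
Import Order.TTheory GRing.Theory Num.Theory.
Local Open Scope ring_scope.

Section IdealGen.
Variables (T : comPzRingType) (P : pred T).

Lemma ideal_gen0 : ideal_gen P 0.
Proof. by exists [::]; rewrite big_nil. Qed.

Lemma ideal_genD a b : ideal_gen P a -> ideal_gen P b -> ideal_gen P (a + b).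
Proof.
by move=> [s [Ps ->]] [t [Pt ->]]; exists (s ++ t); rewrite all_cat Ps Pt big_cat.
Qed.

Lemma ideal_genMl c a : ideal_gen P a -> ideal_gen P (c * a).
Proof.
move=> [s [Ps ->]]; exists [seq (c * p.1, p.2) | p <- s]; split; first by rewrite all_map.
by rewrite big_map mulr_sumr; apply: eq_bigr => p _; rewrite mulrA.
Qed.

Lemma ideal_genN a : ideal_gen P a -> ideal_gen P (- a).
Proof. by rewrite -mulN1r; apply: ideal_genMl. Qed.

Lemma ideal_genB a b : ideal_gen P a -> ideal_gen P b -> ideal_gen P (a - b).
Proof. by move=> Ia Ib; apply: ideal_genD => //; apply: ideal_genN. Qed.

Lemma ideal_gen_mem g : P g -> ideal_gen P g.
Proof. by move=> Pg; exists [:: (1, g)]; rewrite /= Pg big_seq1 mul1r. Qed.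

Lemma ideal_gen_sum (I : Type) (r : seq I) (Q : pred I) (F : I -> T) :
  (forall i, Q i -> ideal_gen P (F i)) -> ideal_gen P (\sum_(i <- r | Q i) F i).
Proof. by move=> IF; apply: big_ind => //; [exact: ideal_gen0 | exact: ideal_genD]. Qed.

End IdealGen.

Lemma ideal_gen_sub (T : comPzRingType) (P Q : pred T) f :
  (forall g, P g -> ideal_gen Q g) -> ideal_gen P f -> ideal_gen Q f.
Proof.
move=> PQ [s [Ps ->]]; elim: s Ps => [_|p s IHs] /=; first by rewrite big_nil; exact: ideal_gen0.
by case/andP=> Pp Ps; rewrite big_cons; apply: ideal_genD; [apply/ideal_genMl/PQ | exact: IHs].
Qed.

Lemma val_ordS_lt n (j : 'I_n) : (j.+1 < n)%N -> ordS j = j.+1 :> nat.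
Proof. exact: modn_small. Qed.

Lemma ordS_le n (j : 'I_n) : (ordS j <= j.+1)%N.
Proof. exact: leq_mod. Qed.

Section LowerUnitriangular.
Variables (T : comUnitRingType) (n : nat).
Implicit Types (A B u : 'M[T]_n).

Definition lower_unitrig u := is_trig_mx u /\ forall i, u i i = 1.

Lemma is_trig_mulmx A B : is_trig_mx A -> is_trig_mx B -> is_trig_mx (A *m B).
Proof.
move=> /is_trig_mxP A_trig /is_trig_mxP B_trig; apply/is_trig_mxP => i j lt_ij.
rewrite mxE big1 // => l _; case: (ltnP i l) => [lt_il|le_li]; first by rewrite A_trig ?mul0r.
by rewrite B_trig ?mulr0 //; apply: leq_ltn_trans lt_ij.
Qed.

Lemma mulmx_trig_diag A B i :
  is_trig_mx A -> is_trig_mx B -> (A *m B) i i = A i i * B i i.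
Proof.
move=> /is_trig_mxP A_trig /is_trig_mxP B_trig.
rewrite mxE (bigD1 i) //= big1 ?addr0 // => l /negbTE ne_li.
case: (ltngtP l i) => [lt_li|lt_il|/val_inj eq_li]; last by rewrite eq_li eqxx in ne_li.
  by rewrite B_trig ?mulr0.
by rewrite A_trig ?mul0r.
Qed.

Lemma lower_unitrig_unitmx u : lower_unitrig u -> u \in unitmx.
Proof. by case=> u_trig u_diag; rewrite unitmxE det_trig // big1 ?unitr1. Qed.

Lemma lower_unitrig_invmx u : lower_unitrig u -> lower_unitrig (invmx u).
Proof.
move=> u_unitrig; have [/is_trig_mxP u_trig u_diag] := u_unitrig.
have /matrixP v_u := mulVmx (lower_unitrig_unitmx u_unitrig).
set v := invmx u in v_u *; have v_uE i j : \sum_l v i l * u l j = (i == j)%:R.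
  by have := v_u i j; rewrite !mxE.
have v_trig (i j : 'I_n) : (i < j)%N -> v i j = 0.
  move: {2}(n - j)%N (leqnn (n - j)) => m; elim: m j => [|m IHm] j le_jm lt_ij.
    by move: (ltn_ord j); lia.
  have := v_uE i j; rewrite -val_eqE ltn_eqF // (bigD1 j) //= u_diag mulr1.
  rewrite big1 ?addr0 // => l ne_lj.
  case: (ltngtP l j) => [lt_lj|lt_jl|/val_inj eq_lj]; last by rewrite eq_lj eqxx in ne_lj.
    by rewrite u_trig ?mulr0.
  by rewrite IHm ?mul0r //; [lia | exact: ltn_trans lt_jl].
split; first exact/is_trig_mxP.
move=> i; have := v_uE i i; rewrite eqxx (bigD1 i) //= u_diag mulr1 big1 ?addr0 // => l ne_li.
case: (ltngtP l i) => [lt_li|lt_il|/val_inj eq_li]; last by rewrite eq_li eqxx in ne_li.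
  by rewrite u_trig ?mulr0.
by rewrite v_trig ?mul0r.
Qed.

End LowerUnitriangular.

Section ConjugatedDiagonal.
Variables (T : comUnitRingType) (n : nat) (u : 'M[T]_n) (d : 'I_n -> T).
Hypothesis u_unitrig : lower_unitrig u.

Definition hess_rel (i j : 'I_n) : T :=
  (d i - d j) * u i j - (d (ordS j) - d j) * (u (ordS j) j * u i (ordS j)).

Let A := invmx u *m diag_mx (\row_i d i) *m u.

Lemma conj_diag_trig : is_trig_mx A /\ forall i, A i i = d i.
Proof.
have [v_trig v_diag] := lower_unitrig_invmx u_unitrig; have [u_trig u_diag] := u_unitrig.
have D_trig := diag_mx_is_trig (\row_i d i).
split; first by do 2!apply: is_trig_mulmx => //.
move=> i; rewrite mulmx_trig_diag ?is_trig_mulmx // mulmx_trig_diag //.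
by rewrite v_diag u_diag mxE eqxx mxE mul1r mulr1.
Qed.

Lemma conj_diag_row_sum (i j : 'I_n) : \sum_l u i l * A l j = d i * u i j.
Proof.
have uA : u *m A = diag_mx (\row_i d i) *m u.
  by rewrite /A !mulmxA mulmxV ?lower_unitrig_unitmx // mul1mx.
by have /matrixP/(_ i j) := uA; rewrite mul_diag_mx !mxE.
Qed.

Lemma sum_split_ordS (F : 'I_n -> T) (j : 'I_n) : (j.+1 < n)%N ->
  (forall l : 'I_n, (l < j)%N -> F l = 0) ->
  \sum_l F l = F j + F (ordS j) + \sum_(l : 'I_n | (j.+1 < l)%N) F l.
Proof.
move=> lt_jn F0.
rewrite (bigID (fun l : 'I_n => (j.+1 < l)%N)) /= addrC; congr (_ + _).
rewrite (bigD1 j) /=; last by apply/negP; lia.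
rewrite (bigD1 (ordS j)) /=; last by rewrite -val_eqE /= modn_small //; lia.
rewrite addrA big1 ?addr0 // => l /andP[/andP[le_lj ne_lj] ne_lSj].
by apply: F0; move: le_lj ne_lj ne_lSj; rewrite -!val_eqE /= modn_small //; lia.
Qed.

Lemma hess_rel_sum (i j : 'I_n) : (j.+1 < i)%N ->
  hess_rel i j = \sum_(l : 'I_n | (j.+1 < l)%N) u i l * A l j.
Proof.
move=> lt_Sji; have lt_Sjn := ltn_trans lt_Sji (ltn_ord i).
have [/is_trig_mxP A_trig A_diag] := conj_diag_trig.
have [/is_trig_mxP u_trig u_diag] := u_unitrig.
have rowE i' : d i' * u i' j = u i' j * d j + u i' (ordS j) * A (ordS j) j
                               + \sum_(l : 'I_n | (j.+1 < l)%N) u i' l * A l j.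
  rewrite -conj_diag_row_sum (sum_split_ordS lt_Sjn) ?A_diag // => l lt_lj.
  by rewrite A_trig ?mulr0.
have A_Sj : A (ordS j) j = (d (ordS j) - d j) * u (ordS j) j.
  have := rowE (ordS j); rewrite u_diag mul1r big1 ?addr0 => [E|l lt_Sjl].
    by rewrite mulrBl E; ring.
  by rewrite u_trig ?mul0r // val_ordS_lt.
have := rowE i; rewrite A_Sj; set s := \sum_(l | _) _ => Ei.
have -> : s = d i * u i j - (u i j * d j + u i (ordS j) * ((d (ordS j) - d j) * u (ordS j) j)).
  by rewrite Ei; ring.
by rewrite /hess_rel; ring.
Qed.

Lemma conj_diag_sum (i j : 'I_n) : (j.+1 < i)%N ->
  A i j = \sum_(l : 'I_n | (j.+1 < l)%N) invmx u i l * hess_rel l j.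
Proof.
move=> lt_Sji; have [/is_trig_mxP u_trig _] := u_unitrig.
pose L := \matrix_(a, b) if (b.+1 < a)%N then A a b else 0.
have uLE l : (u *m L) l j = if (j.+1 < l)%N then hess_rel l j else 0.
  rewrite mxE; case: ifP => [lt_Sjl|/negbT le_lSj].
    rewrite hess_rel_sum // [RHS]big_mkcond; apply: eq_bigr => l' _.
    by rewrite mxE; case: ifP; rewrite ?mulr0.
  rewrite big1 // => l' _; rewrite mxE; case: ifP => [lt_Sjl'|]; last by rewrite mulr0.
  by rewrite u_trig ?mul0r //; move: le_lSj lt_Sjl'; lia.
have : L = invmx u *m (u *m L) by rewrite mulmxA mulVmx ?mul1mx ?lower_unitrig_unitmx.
move/matrixP/(_ i j); rewrite mxE lt_Sji => ->; rewrite mxE [RHS]big_mkcond.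
by apply: eq_bigr => l _; rewrite uLE; case: ifP; rewrite ?mulr0.
Qed.

End ConjugatedDiagonal.

Definition from_digits (b : nat) (s : seq nat) : nat := foldr (fun a acc => a + b * acc)%N 0%N s.

Lemma from_digits_inj b s s' : size s = size s' ->
  all (fun a => a < b)%N s -> all (fun a => a < b)%N s' ->
  from_digits b s = from_digits b s' -> s = s'.
Proof.
elim: s s' => [|a s IHs] [|a' s'] //= [eq_size] /andP[lt_ab lt_sb] /andP[lt_a'b lt_s'b] eq_digits.
have b_gt0 : (0 < b)%N by apply: leq_ltn_trans lt_ab.
have eq_aa' : a = a'.
  have := congr1 (modn^~ b) eq_digits => /=.
  by rewrite ![(_ + b * _)%N]addnC mulnC modnMDl mulnC modnMDl !modn_small.
subst a'; congr (_ :: _); apply: IHs => //.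
by apply/eqP; rewrite -(eqn_pmul2l b_gt0) -(eqn_add2l a) eq_digits.
Qed.

Lemma from_digitsE b s : (\sum_(i < size s) nth 0%N s i * b ^ i)%N = from_digits b s.
Proof.
elim: s => [|a s IHs]; first by rewrite big_ord0.
rewrite /= big_ord_recl /= expn0 muln1 -IHs big_distrr /=; congr (_ + _)%N.
by apply: eq_bigr => i _; rewrite /bump leq0n add1n expnS mulnCA.
Qed.

Section PolynomialIdentity.
Variable K : idomainType.
Hypothesis K_pchar0 : [pchar K] =i pred0.

Lemma pchar0_natr_inj : injective (fun m : nat => m%:R : K).
Proof.
have natr_eq0 := (pcharf0P K).1 K_pchar0.
move=> a b; wlog le_ab : a b / (a <= b)%N => [wlog_ab eq_ab|/eqP].
  by case/orP: (leq_total a b) => /wlog_ab; [apply | move/(_ (esym eq_ab)) ->].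
rewrite -(subnKC le_ab) natrD -subr_eq0 opprD addrA subrr sub0r oppr_eq0 natr_eq0.
by move/eqP ->; rewrite addn0.
Qed.

(* Kronecker substitution x_i := t ^ (b ^ i), with b larger than every exponent of p,
   maps the monomials of p to distinct powers of t. *)
Lemma meval_eq0 k (p : {mpoly K[k]}) : (forall x, p.@[x] = 0) -> p = 0.
Proof.
move=> p0; pose b := msize p.
have digits_lt m : m \in msupp p -> all (fun a => a < b)%N (val m).
  move=> m_p; apply/allP => a a_m; apply: leq_ltn_trans (msize_mdeg_lt m_p).
  move: a_m => /(nthP 0%N) [i lt_ik <-]; rewrite size_tuple in lt_ik.
  by rewrite mdegE (bigD1 (Ordinal lt_ik)) //= (mnm_nth 0%N) leq_addr.
pose code (m : 'X_{1..k}) := from_digits b (val m).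
pose q : {poly K} := \sum_(m <- msupp p) p@_m *: 'X^(code m).
have qE t : q.[t] = p.@[fun i => t ^+ (b ^ i)].
  rewrite mevalE /q horner_sum; apply: eq_bigr => m _.
  rewrite hornerZ hornerXn; congr (_ * _).
  under eq_bigr do rewrite -exprM.
  rewrite prodrXr /code -from_digitsE size_tuple; congr (_ ^+ _).
  by apply: eq_bigr => i _; rewrite (mnm_nth 0%N) mulnC.
have q0 : q = 0.
  apply: (@roots_geq_poly_eq0 _ q [seq (i%:R : K) | i <- iota 0 (size q)]).
  - by apply/allP => t /mapP [i _ ->]; rewrite /root qE p0.
  - by rewrite map_inj_uniq ?iota_uniq //; exact: pchar0_natr_inj.
  - by rewrite size_map size_iota.
apply: msuppnil0; case p_supp: (msupp p) => [|m s] //.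
have m_p : m \in msupp p by rewrite p_supp mem_head.
have := congr1 (fun r : {poly K} => r`_(code m)) q0.
rewrite coef0 /q coef_sum (bigD1_seq m) ?msupp_uniq //= coefZ coefXn eqxx mulr1.
rewrite big1_seq ?addr0 => [/eqP|m' /andP[ne_m'm m'_p]]; first by rewrite mcoeff_eq0 m_p.
rewrite coefZ coefXn; case: eqP => [code_eq|]; last by rewrite mulr0.
suff eq_m'm : m' = m by rewrite eq_m'm eqxx in ne_m'm.
by do 2!apply: val_inj; apply: (@from_digits_inj b); rewrite ?size_tuple ?digits_lt.
Qed.

(* Points supported on the variables of a monomial m divisible by no member of N are zeros
   of N, so the part of p supported on these variables, which contains m, vanishes
   identically. *)
Lemma sqfree_zero_set_msupp k (N : seq 'X_{1..k}) (p : {mpoly K[k]}) :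
  (forall nu, nu \in N -> forall i, (nu i <= 1)%N) ->
  (forall y, (forall nu, nu \in N -> ('X_[nu] : {mpoly K[k]}).@[y] = 0) -> p.@[y] = 0) ->
  forall m, m \in msupp p -> exists2 nu, nu \in N & (nu <= m)%MM.
Proof.
move=> N_sqfree p_van m m_p.
have [/hasP[nu] |N_ndiv] := boolP (has (fun nu => (nu <= m)%MM) N); first by exists nu.
exfalso; pose on_m i := (0 < m i)%N.
pose z (y : 'I_k -> K) i := if on_m i then y i else 0.
pose q := \sum_(m' <- msupp p | [forall i, (0 < m' i)%N ==> on_m i])
            p@_m' *: ('X_[m'] : {mpoly K[k]}).
have qE y : q.@[y] = p.@[z y].
  rewrite [RHS]mevalE /q raddf_sum /= big_mkcond /=; apply: eq_bigr => m' _.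
  case: ifP => [/forallP m'_on|].
    rewrite mevalZ mevalX; congr (_ * _); apply: eq_bigr => i _.
    rewrite /z; case: ifP => // off_i.
    by move: (m'_on i); rewrite off_i implybF -eqn0Ngt => /eqP ->; rewrite !expr0.
  move/negbT; rewrite negb_forall => /existsP[l]; rewrite negb_imply => /andP[m'_l off_l].
  rewrite (bigD1 l) //= /z (negbTE off_l) expr0n.
  by move: m'_l; rewrite lt0n => /negbTE ->; rewrite !mul0r mulr0.
have q0 : q = 0.
  apply: meval_eq0 => y; rewrite qE; apply: p_van => nu nu_N.
  have : ~~ (nu <= m)%MM by apply: contra N_ndiv => le_num; apply/hasP; exists nu.
  rewrite /lem negb_forall => /existsP[l]; rewrite -ltnNge => lt_mnu.
  have m_l0 : m l = 0%N by have := N_sqfree nu nu_N l; lia.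
  rewrite mevalX (bigD1 l) //= /z /on_m m_l0 /= expr0n.
  have -> : (nu l == 0%N) = false by lia.
  by rewrite mul0r.
have := congr1 (mcoeff m) q0; rewrite mcoeff0 /q raddf_sum /=.
rewrite big_mkcond /= (bigD1_seq m) ?msupp_uniq //=.
have -> : [forall i, (0 < m i)%N ==> on_m i] by apply/forallP => i; apply/implyP.
rewrite mcoeffZ mcoeffX eqxx mulr1 big1 ?addr0 => [/eqP|m' ne_m'm].
  by rewrite mcoeff_eq0 m_p.
case: ifP => // _; rewrite mcoeffZ mcoeffX.
by case: eqP => [eq_m'm|]; [rewrite eq_m'm eqxx in ne_m'm | rewrite mulr0].
Qed.

End PolynomialIdentity.

Lemma seq_max_exists (T : eqType) (le : rel T) (s : seq T) :
  reflexive le -> transitive le -> total le -> s != [::] ->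
  exists2 m, m \in s & forall m', m' \in s -> le m' m.
Proof.
move=> le_refl le_trans le_total; elim: s => [//|a s IHs] _.
have [->|/IHs [m m_s m_max]] := eqVneq s [::].
  by exists a; rewrite ?mem_head // => m'; rewrite inE => /eqP ->.
case/orP: (le_total a m) => [le_am|le_ma].
  by exists m => [|m']; rewrite inE ?m_s ?orbT // => /orP[/eqP ->|/m_max].
exists a => [|m']; first exact: mem_head.
by rewrite inE => /orP[/eqP ->|/m_max le_m'm]; [exact: le_refl | exact: le_trans le_ma].
Qed.

Section WeightedOrder.
Variables (k : nat) (weight : 'I_k -> nat).

Definition mweight (m : 'X_{1..k}) : nat := (\sum_v weight v * m v)%N.

Definition weighted_le (a b : 'X_{1..k}) : bool :=
  (mweight a < mweight b)%N || ((mweight a == mweight b) && (a <= b)%O).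

Lemma mweightD a b : mweight (a + b)%MM = (mweight a + mweight b)%N.
Proof. by rewrite /mweight -big_split; apply: eq_bigr => v _; rewrite mnmDE mulnDr. Qed.

Lemma mweight0 : mweight 0%MM = 0%N.
Proof. by rewrite /mweight big1 // => v _; rewrite mnm0E muln0. Qed.

Lemma mweight1 v : mweight U_(v)%MM = weight v.
Proof.
rewrite /mweight (bigD1 v) //= mnm1E eqxx muln1 big1 ?addn0 // => v' ne_v'v.
by rewrite mnm1E eq_sym (negbTE ne_v'v) muln0.
Qed.

Lemma weighted_le_mweight a b : weighted_le a b -> (mweight a <= mweight b)%N.
Proof. by case/orP => [/ltnW //|/andP[/eqP -> _]]. Qed.

Lemma weighted_le_refl : reflexive weighted_le.
Proof. by move=> a; rewrite /weighted_le eqxx lexx orbT. Qed.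

Lemma weighted_le_order : monomial_order weighted_le.
Proof.
split.
- exact: weighted_le_refl.
- move=> a b /andP[]; rewrite /weighted_le.
  case: (ltngtP (mweight a) (mweight b)) => //= _ le_ab le_ba.
  by apply: le_anti; rewrite le_ab le_ba.
- move=> b a c; rewrite /weighted_le.
  case: (ltngtP (mweight a) (mweight b)) => //= ab;
    case: (ltngtP (mweight b) (mweight c)) => //= bc.
  + by rewrite (ltn_trans ab bc).
  + by rewrite -bc ab.
  + by rewrite ab bc.
  + by rewrite ab bc ltnn eqxx; apply: le_trans.
- move=> a b; rewrite /weighted_le.
  by case: (ltngtP (mweight a) (mweight b)) => //= _; exact: le_total.
- split=> [a b c|a]; rewrite /weighted_le ?mweightD ?ltn_add2r ?eqn_add2r ?lemc_add2l //.
  by rewrite mweight0 le0m; case: (mweight a) => //= ?; rewrite orbT.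
Qed.

Lemma is_lead_uniq (K : fieldType) (p : {mpoly K[k]}) m1 m2 :
  is_lead weighted_le p m1 -> is_lead weighted_le p m2 -> m1 = m2.
Proof.
move=> [m1_p m1_max] [m2_p m2_max]; have [_ le_anti _ _ _] := weighted_le_order.
by apply: le_anti; rewrite m1_max ?m2_max.
Qed.

Lemma is_lead_exists (K : fieldType) (p : {mpoly K[k]}) :
  p != 0 -> exists m, is_lead weighted_le p m.
Proof.
move=> p_neq0; have [le_refl _ le_trans le_total _] := weighted_le_order.
have [|m m_p m_max] := @seq_max_exists _ _ (msupp p) le_refl le_trans le_total.
  by rewrite msupp_eq0.
by exists m.
Qed.

End WeightedOrder.

Lemma conj_perm_diag (T : comUnitRingType) n (D : 'M[T]_n) (w : 'S_n) : is_diag_mx D ->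
  invmx (perm_mx w) *m D *m perm_mx w = diag_mx (\row_i D (w^-1 i)%g (w^-1 i)%g).
Proof.
move=> /is_diag_mxP D_diag.
have -> : invmx (perm_mx w) = perm_mx w^-1 :> 'M[T]_n.
  have wVw : perm_mx w^-1 *m perm_mx w = 1%:M :> 'M[T]_n by rewrite -perm_mxM mulVg perm_mx1.
  by rewrite -[RHS]mulmx1 -(mulmxV (unitmx_perm T w)) mulmxA wVw mul1mx.
rewrite -row_permE -[perm_mx w](congr1 perm_mx (invgK w)) -col_permE.
apply/matrixP => i j; rewrite !mxE; have [->|ne_ij] := eqVneq i j; first by rewrite mulr1n.
rewrite D_diag ?mulr0n //; apply: contra ne_ij => /eqP/val_inj eq_wV.
by rewrite -(permKV w i) eq_wV permKV.
Qed.

Section Coordinates.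
Variables (K : fieldType) (n : nat).
Local Notation k := (nv n).
Local Notation U := (genU K n).

Definition var_row (v : 'I_k) : 'I_n := (val (enum_val v)).1.
Definition var_col (v : 'I_k) : 'I_n := (val (enum_val v)).2.

Lemma var_col_lt_row v : (var_col v < var_row v)%N.
Proof. exact: (valP (enum_val v)). Qed.

Definition var_at (i j : 'I_n) (lt_ji : (j < i)%N) : 'I_k := enum_rank (Sub (i, j) lt_ji : Lidx n).

Lemma var_row_at (i j : 'I_n) lt_ji : var_row (@var_at i j lt_ji) = i.
Proof. by rewrite /var_row /var_at enum_rankK. Qed.

Lemma var_col_at (i j : 'I_n) lt_ji : var_col (@var_at i j lt_ji) = j.
Proof. by rewrite /var_col /var_at enum_rankK. Qed.

Lemma var_atK v : var_at (var_col_lt_row v) = v.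
Proof.
rewrite /var_at -[RHS]enum_valK; congr enum_rank; apply: val_inj => /=.
by rewrite /var_row /var_col -surjective_pairing.
Qed.

Lemma genU_lower (i j : 'I_n) (lt_ji : (j < i)%N) : U i j = 'X_(var_at lt_ji).
Proof.
rewrite mxE; case: insubP => [p _ p_ij|]; last by rewrite /= lt_ji.
by congr ('X_(enum_rank _)); apply: val_inj.
Qed.

Lemma genU_var v : U (var_row v) (var_col v) = 'X_v.
Proof. by rewrite (genU_lower (var_col_lt_row v)) var_atK. Qed.

Lemma genU_upper (i j : 'I_n) : ~~ (j < i)%N -> U i j = (i == j)%:R.
Proof. by move=> le_ij; rewrite mxE; case: insubP => [p /= lt_ji|//]; rewrite lt_ji in le_ij. Qed.

Lemma genU_unitrig : lower_unitrig U.
Proof.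
split=> [|i]; last by rewrite genU_upper ?ltnn ?eqxx.
apply/is_trig_mxP => i j lt_ij; rewrite genU_upper; last by rewrite -leqNgt ltnW.
by rewrite -val_eqE ltn_eqF.
Qed.

Lemma evalU_meval (x : 'I_k -> K) : evalU x = map_mx (meval x) U.
Proof.
apply/matrixP => i j; rewrite !mxE.
by case: (insub _) => [p|]; rewrite ?mevalXU ?rmorph_nat.
Qed.

Lemma evalU_unitrig (x : 'I_k -> K) : lower_unitrig (evalU x).
Proof.
have [/is_trig_mxP U_trig U_diag] := genU_unitrig; rewrite evalU_meval.
split=> [|i]; last by rewrite mxE U_diag rmorph1.
by apply/is_trig_mxP => i j lt_ij; rewrite mxE U_trig ?rmorph0.
Qed.

Definition genU_mnm (i j : 'I_n) : 'X_{1..k} :=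
  if @insub _ (fun p : 'I_n * 'I_n => (p.2 < p.1)%N) (Lidx n) (i, j) is Some p
  then U_(enum_rank p)%MM else 0%MM.

Lemma genU_mnm_lower (i j : 'I_n) (lt_ji : (j < i)%N) : genU_mnm i j = U_(var_at lt_ji)%MM.
Proof.
rewrite /genU_mnm; case: insubP => [p _ p_ij|]; last by rewrite /= lt_ji.
by congr (U_(enum_rank _))%MM; apply: val_inj.
Qed.

Definition genU_coef (i j : 'I_n) : K := if (j < i)%N then 1 else (i == j)%:R.

Lemma genU_coef_lower (i j : 'I_n) : (j < i)%N -> genU_coef i j = 1.
Proof. by rewrite /genU_coef => ->. Qed.

Lemma genU_mnmE (i j : 'I_n) : U i j = genU_coef i j *: 'X_[genU_mnm i j].
Proof.
rewrite /genU_coef; case: (ltnP j i) => [lt_ji|le_ij].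
  by rewrite genU_lower genU_mnm_lower scale1r.
have ge_ji : ~~ (j < i)%N by rewrite -leqNgt.
by rewrite genU_upper // /genU_mnm insubN // mpolyX0 scaler_nat.
Qed.

Lemma genU_mnm_le1 (i j : 'I_n) v : (genU_mnm i j v <= 1)%N.
Proof. by rewrite /genU_mnm; case: (insub _) => [p|]; rewrite ?mnm0E // mnm1E leq_b1. Qed.

Lemma genU_mnm_supp (i j : 'I_n) v : (0 < genU_mnm i j v)%N -> var_row v = i /\ var_col v = j.
Proof.
rewrite /genU_mnm; case: insubP => [p _ p_ij|]; last by rewrite mnm0E.
by rewrite mnm1E; case: eqP => // <- _; rewrite /var_row /var_col enum_rankK p_ij.
Qed.

End Coordinates.

Section HessenbergPatch.
Variables (K : fieldType) (n : nat) (S : 'M[K]_n) (w : 'S_n).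
Hypothesis S_diag : is_diag_mx S.
Local Notation k := (nv n).
Local Notation MP := {mpoly K[nv n]}.
Local Notation U := (genU K n).

Definition dw (i : 'I_n) : K := S (w^-1 i)%g (w^-1 i)%g.

Definition frel (i j : 'I_n) : MP := hess_rel U (fun l => (dw l)%:MP) i j.

Definition is_frel : pred MP :=
  [pred g | [exists i : 'I_n, exists j : 'I_n, (j.+1 < i)%N && (g == frel i j)]].

Local Notation I := (ideal_gen is_frel).

Lemma frel_in (i j : 'I_n) : (j.+1 < i)%N -> I (frel i j).
Proof.
move=> lt_Sji; apply/ideal_gen_mem/existsP; exists i.
by apply/existsP; exists j; rewrite lt_Sji eqxx.
Qed.

Lemma Amat_conj : Amat S w = invmx U *m diag_mx (\row_i (dw i)%:MP) *m U.
Proof.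
have S'_diag : is_diag_mx (map_mx (fun c => c%:MP) S : 'M[MP]_n).
  by apply/is_diag_mxP => i j ne_ij; rewrite mxE (is_diag_mxP S_diag) ?mpolyC0.
have S'_conj : invmx (perm_mx w) *m map_mx (fun c => c%:MP) S *m perm_mx w
               = diag_mx (\row_i (dw i)%:MP) :> 'M[MP]_n.
  by rewrite (conj_perm_diag w S'_diag); congr diag_mx; apply/rowP => i; rewrite !mxE.
by rewrite -S'_conj /Amat !mulmxA.
Qed.

Lemma Iw_frel f : Iw S w f <-> I f.
Proof.
have U_unitrig := genU_unitrig K n.
split; apply: ideal_gen_sub => g /existsP[i /existsP[j /andP[lt_Sji /eqP ->]]].
  rewrite Amat_conj (conj_diag_sum (fun l => (dw l)%:MP) U_unitrig lt_Sji).
  by apply: ideal_gen_sum => l lt_Sjl; apply/ideal_genMl/frel_in.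
rewrite /frel (hess_rel_sum _ U_unitrig lt_Sji) -Amat_conj.
apply: ideal_gen_sum => l lt_Sjl; apply/ideal_genMl/ideal_gen_mem.
by apply/existsP; exists l; apply/existsP; exists j; rewrite lt_Sjl eqxx.
Qed.

Lemma frel_meval (x : 'I_k -> K) (i j : 'I_n) : (frel i j).@[x] = hess_rel (evalU x) dw i j.
Proof. by rewrite /frel /hess_rel evalU_meval !mxE !(rmorphB, rmorphM) /= !mevalC. Qed.

Lemma patchP (x : 'I_k -> K) :
  patch S w x <-> forall i j : 'I_n, (j.+1 < i)%N -> hess_rel (evalU x) dw i j = 0.
Proof.
have u_unitrig := evalU_unitrig x; rewrite /patch /in_HDelta /=.
have -> : invmx (evalU x) *m invmx (perm_mx w) *m S *m perm_mx w *m evalU x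
          = invmx (evalU x) *m diag_mx (\row_i dw i) *m evalU x.
  by rewrite -(conj_perm_diag w S_diag) !mulmxA.
split=> H_x i j lt_Sji.
  by rewrite hess_rel_sum // big1 // => l lt_Sjl; rewrite H_x ?mulr0.
by rewrite conj_diag_sum // big1 // => l lt_Sjl; rewrite H_x ?mulr0.
Qed.

Lemma frel_ideal_vanish f : I f -> forall x, patch S w x -> f.@[x] = 0.
Proof.
move=> [s [s_frel ->]] x /patchP x_patch; rewrite rmorph_sum big1_seq //= => p p_s.
have /existsP[i /existsP[j /andP[lt_Sji /eqP ->]]] := allP s_frel p p_s.
by rewrite rmorphM /= frel_meval x_patch ?mulr0.
Qed.

End HessenbergPatch.

Section Elimination.
Variables (K : fieldType) (n : nat) (S : 'M[K]_n) (w : 'S_n).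
Local Notation k := (nv n).
Local Notation MP := {mpoly K[nv n]}.
Local Notation U := (genU K n).
Local Notation d := (dw S w).
Local Notation I := (ideal_gen (is_frel S w)).

Definition pivot (i j : 'I_n) : bool := (j.+1 < i)%N && (d i != d j).

Definition pivot_coef (i j : 'I_n) : K := (d (ordS j) - d j) / (d i - d j).

Lemma pivot_ordS (i j : 'I_n) : pivot i j -> ordS j = j.+1 :> nat.
Proof. by case/andP=> lt_Sji _; apply/val_ordS_lt/(ltn_trans lt_Sji). Qed.

Lemma pivot_coefK (i j : 'I_n) : pivot i j -> (d i - d j) * pivot_coef i j = d (ordS j) - d j.
Proof. by case/andP=> _ ne_d; rewrite mulrC mulfVK // subr_eq0. Qed.

Lemma frel_pivotE (i j : 'I_n) : pivot i j -> frel S w i j =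
  (d i - d j)%:MP * (U i j - (pivot_coef i j)%:MP * (U (ordS j) j * U i (ordS j))).
Proof. by move=> piv; rewrite /frel /hess_rel -!mpolyCB -(pivot_coefK piv) mpolyCM; ring. Qed.

Lemma pivot_ind (i : 'I_n) (P : 'I_n -> Prop) :
  (forall j, ~~ pivot i j -> P j) -> (forall j, pivot i j -> P (ordS j) -> P j) -> forall j, P j.
Proof.
move=> P_base P_step j; move: {2}(i - j)%N (leqnn (i - j)) => m.
elim: m j => [|m IHm] j le_ijm; have [piv|/P_base//] := boolP (pivot i j).
  by case/andP: piv => lt_Sji _; move: le_ijm; lia.
by apply: P_step (IHm _ _) => //; rewrite (pivot_ordS piv); lia.
Qed.

Fixpoint elim_term_rec (m : nat) (i j : 'I_n) : K * 'X_{1..k} :=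
  if m is m'.+1 then
    if pivot i j then
      let t := elim_term_rec m' i (ordS j) in (pivot_coef i j * t.1, (genU_mnm (ordS j) j + t.2)%MM)
    else (genU_coef K i j, genU_mnm i j)
  else (genU_coef K i j, genU_mnm i j).

(* x_ij modulo the ideal, as a coefficient times a monomial in non-pivot variables;
   i - j bounds the depth of the recursion. *)
Definition elim_term (i j : 'I_n) : K * 'X_{1..k} := elim_term_rec (i - j) i j.

Lemma elim_termE (i j : 'I_n) : elim_term i j =
  if pivot i j then (pivot_coef i j * (elim_term i (ordS j)).1,
                     (genU_mnm (ordS j) j + (elim_term i (ordS j)).2)%MM)
  else (genU_coef K i j, genU_mnm i j).
Proof.
rewrite /elim_term; have [piv|npiv] := ifPn.
  have -> : (i - j = (i - ordS j).+1)%N by rewrite (pivot_ordS piv); case/andP: piv; lia.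
  by rewrite /= piv.
by case: (i - j)%N => [|m] //=; rewrite (negbTE npiv).
Qed.

Definition elim_poly (i j : 'I_n) : MP := (elim_term i j).1 *: 'X_[(elim_term i j).2].

Lemma elim_polyE (i j : 'I_n) :
  elim_poly i j =
  if pivot i j then pivot_coef i j *: (U (ordS j) j * elim_poly i (ordS j)) else U i j.
Proof.
rewrite /elim_poly elim_termE; case: ifP => piv /=; last by rewrite genU_mnmE.
have lt_jSj : (j < ordS j)%N by rewrite (pivot_ordS piv).
by rewrite genU_mnmE /genU_coef lt_jSj scale1r mpolyXD -scalerA scalerAr.
Qed.

Lemma elim_poly_ordS (j : 'I_n) : elim_poly (ordS j) j = U (ordS j) j.
Proof. by rewrite elim_polyE /pivot ltnNge ordS_le. Qed.

Lemma elim_poly_sub_genU (i j : 'I_n) : I (elim_poly i j - U i j).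
Proof.
elim/(pivot_ind (i := i)): j => [j npiv|j piv IHj].
  by rewrite elim_polyE (negbTE npiv) subrr; exact: ideal_gen0.
have [lt_Sji ne_d] := andP piv; rewrite -subr_eq0 in ne_d.
have frel_scaled : U i j - (pivot_coef i j)%:MP * (U (ordS j) j * U i (ordS j))
                   = ((d i - d j)^-1)%:MP * frel S w i j.
  by rewrite frel_pivotE // [RHS]mulrA -mpolyCM mulVf // mul1r.
rewrite elim_polyE piv.
have -> : pivot_coef i j *: (U (ordS j) j * elim_poly i (ordS j)) - U i j =
    ((pivot_coef i j)%:MP * U (ordS j) j) * (elim_poly i (ordS j) - U i (ordS j))
    - (U i j - (pivot_coef i j)%:MP * (U (ordS j) j * U i (ordS j))).
  by rewrite -mul_mpolyC; ring.
by rewrite frel_scaled; apply: ideal_genB; apply: ideal_genMl => //; apply: frel_in.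
Qed.

Definition free_mnm (j : nat) (m : 'X_{1..k}) : Prop :=
  forall v, (m v <= 1)%N /\
    ((0 < m v)%N -> (j <= var_col v)%N /\ ~~ pivot (var_row v) (var_col v)).

Lemma free_mnm_step (j : 'I_n) (m : 'X_{1..k}) : (j.+1 < n)%N -> free_mnm j.+1 m ->
  free_mnm j (genU_mnm (ordS j) j + m)%MM.
Proof.
move=> lt_Sjn m_free v; have Sj := val_ordS_lt lt_Sjn.
have [m_le1 m_supp] := m_free v; rewrite mnmDE.
have [->|U_pos] := posnP (genU_mnm (ordS j) j v).
  by split=> // /m_supp [le_Sj ->]; split=> //; apply: ltnW.
have [row_v col_v] := genU_mnm_supp U_pos.
have [->|/m_supp[]] := posnP (m v); last by rewrite col_v ltnn.
by rewrite addn0 genU_mnm_le1 row_v col_v /pivot Sj ltnn.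
Qed.

Lemma elim_term_free (i j : 'I_n) : free_mnm j (elim_term i j).2.
Proof.
elim/(pivot_ind (i := i)): j => [j npiv|j piv IHj]; rewrite elim_termE.
  rewrite (negbTE npiv) => v /=; rewrite genU_mnm_le1; split=> // /genU_mnm_supp[-> ->].
  by rewrite leqnn.
have [lt_Sji _] := andP piv; rewrite piv /=.
by apply: (free_mnm_step (ltn_trans lt_Sji (ltn_ord i))); rewrite -(pivot_ordS piv).
Qed.

Definition subst_tuple : k.-tuple MP := [tuple elim_poly (var_row v) (var_col v) | v < k].

Local Notation subst p := (p \mPo subst_tuple).

Lemma subst_X v : subst 'X_v = elim_poly (var_row v) (var_col v).
Proof. by rewrite comp_mpolyXU -tnth_nth tnth_mktuple. Qed.

Lemma subst_genU (i j : 'I_n) : subst (U i j) = elim_poly i j.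
Proof.
case: (ltnP j i) => [lt_ji|le_ij].
  by rewrite (genU_lower K lt_ji) subst_X var_row_at var_col_at.
rewrite elim_polyE /pivot ltnNge (leq_trans le_ij) //= genU_upper; last by rewrite -leqNgt.
by rewrite rmorph_nat.
Qed.

Lemma subst_sub_in (p : MP) : I (p - subst p).
Proof.
have substM a b : I (a - subst a) -> I (b - subst b) -> I (a * b - subst (a * b)).
  move=> Ia Ib; rewrite rmorphM /=.
  have -> : a * b - subst a * subst b = a * (b - subst b) + subst b * (a - subst a) by ring.
  by apply: ideal_genD; apply: ideal_genMl.
have substX m : I ('X_[m] - subst 'X_[m]).
  rewrite mpolyXE_id; apply: (big_ind (fun x => I (x - subst x))) => //.
    by rewrite rmorph1 subrr; exact: ideal_gen0.
  move=> v _; elim: (m v) => [|e IHe]; first by rewrite !expr0 rmorph1 subrr; exact: ideal_gen0.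
  rewrite exprS; apply: substM => //.
  by rewrite subst_X -(genU_var K) -opprB; apply/ideal_genN/elim_poly_sub_genU.
elim/mpolyind: p => [|c m p _ _ IHp]; first by rewrite raddf0 subrr; exact: ideal_gen0.
rewrite raddfD /= comp_mpolyZ.
have -> : c *: 'X_[m] + p - (c *: subst 'X_[m] + subst p) =
    c%:MP * ('X_[m] - subst 'X_[m]) + (p - subst p) by rewrite -!mul_mpolyC; ring.
by apply: ideal_genD => //; apply: ideal_genMl.
Qed.

Lemma subst_frel (i j : 'I_n) : subst (frel S w i j) =
  (d i - d j)%:MP * elim_poly i j - (d (ordS j) - d j)%:MP * (U (ordS j) j * elim_poly i (ordS j)).
Proof.
by rewrite /frel /hess_rel !(rmorphB, rmorphM) /= !comp_mpolyC !subst_genU elim_poly_ordS.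
Qed.

Lemma subst_frel_pivot (i j : 'I_n) : pivot i j -> subst (frel S w i j) = 0.
Proof.
move=> piv; rewrite subst_frel (elim_polyE i j) piv -mul_mpolyC mulrA -mpolyCM.
by rewrite (pivot_coefK piv) subrr.
Qed.

Definition rel_coef (i j : 'I_n) : K := - (d (ordS j) - d j) * (elim_term i (ordS j)).1.
Definition rel_mnm (i j : 'I_n) : 'X_{1..k} := (genU_mnm (ordS j) j + (elim_term i (ordS j)).2)%MM.

(* Off the pivots d_i = d_j kills the x_ij term of f_ij. *)
Lemma subst_frel_nonpivot (i j : 'I_n) : (j.+1 < i)%N -> ~~ pivot i j ->
  subst (frel S w i j) = rel_coef i j *: 'X_[rel_mnm i j].
Proof.
move=> lt_Sji; rewrite /pivot lt_Sji negbK => /eqP eq_d.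
have lt_jSj : (j < ordS j)%N by rewrite val_ordS_lt ?(ltn_trans lt_Sji).
rewrite subst_frel eq_d subrr mpolyC0 mul0r sub0r genU_mnmE /genU_coef lt_jSj scale1r.
rewrite /elim_poly /rel_coef /rel_mnm mpolyXD -scalerAr -!mul_mpolyC mpolyCM mpolyCN; ring.
Qed.

Lemma rel_mnm_free (i j : 'I_n) : (j.+1 < i)%N -> free_mnm j (rel_mnm i j).
Proof.
move=> lt_Sji; have lt_Sjn := ltn_trans lt_Sji (ltn_ord i).
by apply: (free_mnm_step lt_Sjn); rewrite -(val_ordS_lt lt_Sjn); apply: elim_term_free.
Qed.

End Elimination.

Section VanishingIdeal.
Variables (K : fieldType) (n : nat) (S : 'M[K]_n) (w : 'S_n).
Hypotheses (K_pchar0 : [pchar K] =i pred0) (S_diag : is_diag_mx S).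
Local Notation k := (nv n).
Local Notation MP := {mpoly K[nv n]}.
Local Notation I := (ideal_gen (is_frel S w)).
Local Notation pivot := (pivot S w).
Local Notation subst p := (p \mPo subst_tuple S w).

Definition is_monomial_gen (i j : 'I_n) : bool :=
  [&& (j.+1 < i)%N, ~~ pivot i j & rel_coef S w i j != 0].

Definition monomial_gens : seq 'X_{1..k} :=
  [seq rel_mnm S w p.1 p.2 | p <- enum [pred p : 'I_n * 'I_n | is_monomial_gen p.1 p.2]].

Lemma monomial_gens_free nu : nu \in monomial_gens -> forall v,
  (nu v <= 1)%N /\ ((0 < nu v)%N -> ~~ pivot (var_row v) (var_col v)).
Proof.
case/mapP => [[i j]]; rewrite mem_enum => /and3P[lt_Sji _ _] -> v.
by have [le1 supp] := rel_mnm_free S w lt_Sji v; split=> // /supp[].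
Qed.

Lemma subst_in (p : MP) : I p -> I (subst p).
Proof.
move=> Ip; have -> : subst p = p - (p - subst p) by rewrite opprB addrC subrK.
exact/ideal_genB/subst_sub_in.
Qed.

Lemma monomial_gens_in nu : nu \in monomial_gens -> I 'X_[nu].
Proof.
case/mapP => [[i j]]; rewrite mem_enum => /and3P[lt_Sji npiv ne0] ->.
have -> : 'X_[rel_mnm S w i j] = ((rel_coef S w i j)^-1)%:MP * subst (frel S w i j).
  by rewrite subst_frel_nonpivot // mul_mpolyC scalerA mulVf // scale1r.
by apply/ideal_genMl/subst_in/frel_in.
Qed.

Definition lift_point (y : 'I_k -> K) (v : 'I_k) : K := (tnth (subst_tuple S w) v).@[y].

Lemma meval_lift_point (p : MP) y : p.@[lift_point y] = (subst p).@[y].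
Proof. by rewrite comp_mpoly_meval. Qed.

Lemma lift_point_patch y : (forall nu, nu \in monomial_gens -> ('X_[nu] : MP).@[y] = 0) ->
  patch S w (lift_point y).
Proof.
move=> y_zero; apply/(patchP _ S_diag) => i j lt_Sji.
rewrite -frel_meval meval_lift_point.
have [piv|npiv] := boolP (pivot i j); first by rewrite subst_frel_pivot // meval0.
rewrite subst_frel_nonpivot // mevalZ.
have [->|ne0] := eqVneq (rel_coef S w i j) 0; first by rewrite mul0r.
rewrite y_zero ?mulr0 //; apply/mapP; exists (i, j) => //.
by rewrite mem_enum inE /is_monomial_gen lt_Sji npiv.
Qed.

Lemma vanish_subst_msupp (f : MP) : (forall x, patch S w x -> f.@[x] = 0) ->
  forall m, m \in msupp (subst f) -> exists2 nu, nu \in monomial_gens & (nu <= m)%MM.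
Proof.
move=> f_van; apply: sqfree_zero_set_msupp => // [nu /monomial_gens_free nu_free v|y y_zero].
  by have [] := nu_free v.
by rewrite -meval_lift_point; apply/f_van/lift_point_patch.
Qed.

Lemma vanish_in (f : MP) : (forall x, patch S w x -> f.@[x] = 0) -> I f.
Proof.
move=> f_van; rewrite -[f](subrK (subst f)); apply: ideal_genD; first exact: subst_sub_in.
rewrite [subst f]mpolyE; apply: ideal_gen_sum => m _.
have [m_f|] := boolP (m \in msupp (subst f)); last first.
  by rewrite mcoeff_msupp negbK => /eqP ->; rewrite scale0r; exact: ideal_gen0.
have [nu nu_gen le_num] := vanish_subst_msupp f_van m_f.
by rewrite -(submK le_num) mpolyXD -mul_mpolyC mulrA; apply/ideal_genMl/monomial_gens_in.
Qed.

End VanishingIdeal.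

Section GroebnerBasis.
Variables (K : fieldType) (n : nat) (S : 'M[K]_n) (w : 'S_n).
Hypotheses (K_pchar0 : [pchar K] =i pred0) (S_diag : is_diag_mx S).
Local Notation k := (nv n).
Local Notation MP := {mpoly K[nv n]}.
Local Notation d := (dw S w).
Local Notation pivot := (pivot S w).
Local Notation subst p := (p \mPo subst_tuple S w).

(* x_ij at a pivot has weight 2^(n-j), more than 2^(n-j-1) >= the weight of x_{j+1,j} x_{i,j+1},
   so it leads f_ij. *)
Definition pivot_weight (v : 'I_k) : nat :=
  if pivot (var_row v) (var_col v) then (2 ^ (n - var_col v))%N else 0%N.

Local Notation le := (weighted_le pivot_weight).
Local Notation wt := (mweight pivot_weight).

Lemma pivot_weight_at (i j : 'I_n) (lt_ji : (j < i)%N) :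
  pivot_weight (var_at lt_ji) = if pivot i j then (2 ^ (n - j))%N else 0%N.
Proof. by rewrite /pivot_weight var_row_at var_col_at. Qed.

Lemma mweight_eq0 (m : 'X_{1..k}) :
  wt m = 0%N <-> forall v, (0 < m v)%N -> ~~ pivot (var_row v) (var_col v).
Proof.
rewrite /mweight; split=> [/eqP|m_free].
  rewrite sum_nat_eq0 => /forallP m0 v m_v; apply/negP => piv.
  by move: (m0 v) => /implyP/(_ isT); rewrite /pivot_weight piv muln_eq0 expn_eq0 /=; lia.
apply: big1 => v _; rewrite /pivot_weight.
have [->|/m_free npiv] := posnP (m v); first by rewrite muln0.
by rewrite (negbTE npiv) mul0n.
Qed.

Lemma frel_mnmE (i j : 'I_n) : (j.+1 < i)%N -> frel S w i j =
  (d i - d j) *: 'X_[genU_mnm i j]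
  - (d (ordS j) - d j) *: 'X_[genU_mnm (ordS j) j + genU_mnm i (ordS j)].
Proof.
move=> lt_Sji; have Sj := val_ordS_lt (ltn_trans lt_Sji (ltn_ord i)).
rewrite /frel /hess_rel -!mpolyCB !mul_mpolyC !genU_mnmE !genU_coef_lower ?Sj //; try lia.
by rewrite !scale1r mpolyXD.
Qed.

Lemma frel_lead (i j : 'I_n) : pivot i j -> is_lead le (frel S w i j) (genU_mnm i j).
Proof.
move=> piv; have [lt_Sji ne_d] := andP piv; have Sj := pivot_ordS piv.
have lt_ji : (j < i)%N by lia.
have lt_jSj : (j < ordS j)%N by lia.
have lt_Sj_i : (ordS j < i)%N by lia.
set a := genU_mnm i j; set b := (genU_mnm (ordS j) j + genU_mnm i (ordS j))%MM.
have wt_a : wt a = (2 ^ (n - j))%N.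
  by rewrite /a (genU_mnm_lower lt_ji) mweight1 pivot_weight_at piv.
have wt_ba : (wt b < wt a)%N.
  rewrite wt_a /b mweightD (genU_mnm_lower lt_jSj) (genU_mnm_lower lt_Sj_i).
  rewrite !mweight1 !pivot_weight_at.
  rewrite /pivot Sj ltnn /= add0n; case: ifP => _; last by rewrite expn_gt0.
  by rewrite ltn_exp2l //; move: (ltn_ord i); lia.
have ne_ba : (b == a) = false by apply/negbTE; apply: contraTneq wt_ba => ->; rewrite ltnn.
rewrite -subr_eq0 in ne_d; rewrite (frel_mnmE lt_Sji) -/a -/b; split.
  by rewrite mcoeff_msupp mcoeffB !mcoeffZ !mcoeffX eqxx ne_ba mulr0 subr0 mulr1.
move=> m /msuppB_le; rewrite mem_cat => /orP[] /msuppZ_le; rewrite msuppX inE => /eqP ->.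
  exact: weighted_le_refl.
by rewrite /weighted_le wt_ba.
Qed.

Lemma mpolyX_lead (nu : 'X_{1..k}) : is_lead le ('X_[nu] : MP) nu.
Proof.
split; first by rewrite msuppX mem_head.
by move=> m; rewrite msuppX inE => /eqP ->; exact: weighted_le_refl.
Qed.

Lemma subst_id (f : MP) : (forall m, m \in msupp f -> wt m = 0%N) -> subst f = f.
Proof.
move=> f_free; rewrite {1}[f]mpolyE raddf_sum /= [RHS]mpolyE big_seq [RHS]big_seq.
apply: eq_bigr => m /f_free/mweight_eq0 m_free; rewrite comp_mpolyZ comp_mpolyX [in RHS]mpolyXE_id.
congr (_ *: _); apply: eq_bigr => v _.
have [->|/m_free npiv] := posnP (m v); first by rewrite !expr0.
by rewrite tnth_mktuple elim_polyE (negbTE npiv) genU_var.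
Qed.

Definition groebner_gens : seq MP :=
  [seq frel S w p.1 p.2 | p <- enum [pred p : 'I_n * 'I_n | pivot p.1 p.2]]
  ++ [seq 'X_[nu] | nu <- monomial_gens S w].

Lemma groebner_gens_sqfree : squarefree_leads le groebner_gens.
Proof.
move=> g; rewrite mem_cat => /orP[] /mapP.
  case=> [[i j]]; rewrite mem_enum inE /= => piv -> mg /is_lead_uniq /(_ (frel_lead piv)) -> v.
  exact: genU_mnm_le1.
case=> nu nu_gen -> mg /is_lead_uniq /(_ (mpolyX_lead nu)) -> v.
by case: (monomial_gens_free nu_gen v).
Qed.

(* A nonzero f in I either has a pivot variable x_v in its leading monomial, divisible by the
   lead x_v of f_v, or is free of pivots altogether; then f = subst f vanishes on the patch,
   so its leading monomial is divisible by one of monomial_gens. *)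
Lemma groebner_gens_basis : groebner_basis le (Iw S w) groebner_gens.
Proof.
split=> [g g_gens|f /(Iw_frel w S_diag) f_I f_neq0].
  apply/(Iw_frel w S_diag); move: g_gens; rewrite mem_cat => /orP[] /mapP [x].
    by case: x => i j; rewrite mem_enum inE /= => /andP[lt_Sji _] ->; apply: frel_in.
  by move=> /monomial_gens_in ? ->.
have [mf [mf_f mf_max]] := is_lead_exists pivot_weight f_neq0.
have [/existsP[v /andP[mf_v piv]]|] :=
  boolP [exists v, (0 < mf v)%N && pivot (var_row v) (var_col v)].
  exists (frel S w (var_row v) (var_col v)).
    rewrite mem_cat; apply/orP; left; apply/mapP.
    by exists (var_row v, var_col v); rewrite ?mem_enum.
  exists (genU_mnm (var_row v) (var_col v)), mf; split => //; first exact: frel_lead.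
  rewrite (genU_mnm_lower (var_col_lt_row v)) var_atK; apply/mnm_lepP => v'.
  by rewrite mnm1E; case: eqP => // <-.
rewrite negb_exists => /forallP mf_free.
have wt_mf : wt mf = 0%N.
  by apply/mweight_eq0 => v mf_v; move: (mf_free v); rewrite mf_v.
have f_free m : m \in msupp f -> wt m = 0%N.
  by move=> /mf_max /weighted_le_mweight; rewrite wt_mf leqn0 => /eqP.
have [nu nu_gen le_nu_mf] : exists2 nu, nu \in monomial_gens S w & (nu <= mf)%MM.
  apply: (vanish_subst_msupp K_pchar0 S_diag (f := f)); first exact: frel_ideal_vanish.
  by rewrite subst_id.
exists 'X_[nu]; first by rewrite mem_cat; apply/orP; right; apply/mapP; exists nu.
by exists nu, mf; split => //; exact: mpolyX_lead.
Qed.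

End GroebnerBasis.

Lemma patch_origin (K : fieldType) n (S : 'M[K]_n) (w : 'S_n) :
  is_diag_mx S -> patch S w (fun _ => 0).
Proof.
move=> S_diag; apply/(patchP w S_diag) => i j lt_Sji.
have Sj := val_ordS_lt (ltn_trans lt_Sji (ltn_ord i)).
have evalU0 : evalU (fun _ : 'I_(nv n) => 0 : K) = 1%:M.
  apply/matrixP => a b; rewrite !mxE.
  by case: insubP => [p /= lt_ba _|//]; rewrite -val_eqE gtn_eqF.
have ne_lt (a b : 'I_n) : (b < a)%N -> (a == b) = false by rewrite -val_eqE => /gtn_eqF.
have lt_ji : (j < i)%N by lia.
have lt_jSj : (j < ordS j)%N by rewrite Sj.
have lt_Sj_i : (ordS j < i)%N by rewrite Sj.
by rewrite /hess_rel evalU0 !mxE !ne_lt // !mulr0 subrr.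
Qed.

Lemma vanishing_ideal_radical (K : fieldType) k (V : ('I_k -> K) -> Prop) :
  (exists x, V x) -> radical_ideal (vanishing_ideal V).
Proof.
move=> [x0 V_x0] f [|m] fm; first by have /eqP := fm x0 V_x0; rewrite expr0 meval1 oner_eq0.
by move=> x /fm /eqP; rewrite rmorphXn expf_eq0 => /eqP.
Qed.

Theorem mainTheorem13 (R : realType) (n : nat) (S : 'M[R[i]]_n)
  (hS : is_diag_mx S) (w : 'S_n) :
  [/\ (exists le : rel 'X_{1..nv n}, monomial_order le /\
         exists G : seq {mpoly R[i][nv n]},
           groebner_basis le (Iw S w) G /\ squarefree_leads le G),
      radical_ideal (Iw S w)
    & forall f : {mpoly R[i][nv n]}, Iw S w f <-> vanishing_ideal (patch S w) f].
Proof.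
have pchar0 : [pchar R[i]] =i pred0 := pchar_num _.
have Iw_vanishing f : Iw S w f <-> vanishing_ideal (patch S w) f.
  rewrite (Iw_frel w hS); split; [exact: frel_ideal_vanish | exact: vanish_in].
split=> //.
  exists (weighted_le (pivot_weight S w)); split; first exact: weighted_le_order.
  exists (groebner_gens S w); split; [exact: groebner_gens_basis | exact: groebner_gens_sqfree].
move=> f m /Iw_vanishing fm; apply/Iw_vanishing.
exact: (vanishing_ideal_radical (ex_intro _ _ (patch_origin w hS))) fm.
Qed.
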